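(* Let $n \geq 2$ be a power of 2. Then $\mathsf{QNAADT}(\mathsf{ADDR}_n) = \Theta(n)$.
   Context: $\mathsf{ADDR}_n:\{0,1\}^{\log n+n}\to\{0,1\}$ is $\mathsf{ADDR}_n(x,y)=y_{\mathsf{bin}(x)}$ for $x\in\{0,1\}^{\log n}$, $y\in\{0,1\}^n$, where $\mathsf{bin}(x)\in[n]$ is the integer whose binary representation is $x$. $\mathsf{AND}_S(z)=\prod_{i\in S}z_i$. A quantum non-adaptive AND decision tree of cost $c$ for a function on $m$ bits works on $|S_1,\dots,S_c\rangle|b\rangle|w\rangle$ with $S_j\subseteq[m]$, $b\in\{0,1\}^c$, arbitrary workspace; it starts from an input-independent state $|\psi\rangle$, applies once the oracle $O_z$ mapping $|S_1,\dots,S_c\rangle|b_1,\dots,b_c\rangle|w\rangle$ to $|S_1,\dots,S_c\rangle|b_1\oplus\mathsf{AND}_{S_1}(z),\dots,b_c\oplus\mathsf{AND}_{S_c}(z)\rangle|w\rangle$, and accepts with probability $\|\Pi O_z|\psi\rangle\|^2$ for a fixed projector $\Pi$; $\mathsf{QNAADT}(f)$ is the minimum cost of one computing $f$ with success probability at least $2/3$ on every input. *)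

From HB Require Import structures.
From mathcomp Require Import all_boot all_order all_algebra.
From mathcomp Require Import reals.
From mathcomp Require Import complex.

Set Implicit Arguments.
Unset Strict Implicit.
Unset Printing Implicit Defensive.

Import Order.TTheory GRing.Theory Num.Theory.
Local Open Scope ring_scope.

Definition ANDS (m : nat) (S : {set 'I_m}) (z : 'I_m -> bool) : bool :=
  [forall i in S, z i].

(* bin(x): the integer whose binary representation is x = x_0 ... x_{k-1}
   (x_0 most significant bit). *)
Definition bin (k : nat) (x : 'I_k -> bool) : nat :=
  (\sum_(i < k) (x i : nat) * 2 ^ (k.-1 - i))%N.

(* ADDR_n with n = 2^k on (k + n) bits: first k bits are the address x,
   the remaining n bits are y = y_0 ... y_{n-1};  ADDR_n(x,y) = y_{bin(x)}. *)
Definition ADDR (k : nat) (z : 'I_(k + 2 ^ k) -> bool) : bool :=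
  let x := fun i : 'I_k => z (lshift (2 ^ k) i) in
  let y := fun j : 'I_(2 ^ k) => z (rshift k j) in
  [exists j : 'I_(2 ^ k), (val j == bin x) && y j].

(* The Hilbert space has orthonormal basis |S_1..S_c>|b_1..b_c>|w>,    *)
(* with S_j subsets of [m], b in {0,1}^c and w in a finite workspace W.*)

Definition qbasis (m c : nat) (W : finType) : finType :=
  ({ffun 'I_c -> {set 'I_m}} * {ffun 'I_c -> bool} * W)%type.

Section Quantum.
Variables (R : realType) (m c : nat) (W : finType).
Local Notation C := (R[i]).
Local Notation B := (qbasis m c W).

Definition qstate := B -> C.

Definition sqnorm (v : qstate) : C := \sum_(x : B) `|v x| ^+ 2.

Definition unit_state (v : qstate) : Prop := sqnorm v = 1.

(* The oracle O_z : |S>|b>|w> |-> |S>|b xor (AND_{S_j}(z))_j>|w>.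
   It is a permutation of the basis (an involution), so
   (O_z v)(S,b,w) = v(S, b xor AND_S(z), w). *)
Definition oracle_basis (z : 'I_m -> bool) (x : B) : B :=
  let: (Ss, b, w) := x in (Ss, [ffun j => b j (+) ANDS (Ss j) z], w).

Definition oracle (z : 'I_m -> bool) (v : qstate) : qstate :=
  fun x => v (oracle_basis z x).

Definition qop := B -> B -> C.

Definition apply_op (P : qop) (v : qstate) : qstate :=
  fun x => \sum_(y : B) P x y * v y.

Definition is_projector (P : qop) : Prop :=
  (forall x y, P x y = (P y x)^*) /\
  (forall x z, \sum_(y : B) P x y * P y z = P x z).

Definition accept_prob (P : qop) (psi : qstate) (z : 'I_m -> bool) : C :=
  sqnorm (apply_op P (oracle z psi)).

End Quantum.

Definition qnaadt_computes (R : realType) (m c : nat) (W : finType)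
    (psi : qstate R m c W) (P : qop R m c W) (f : ('I_m -> bool) -> bool)
    : Prop :=
  unit_state psi /\ is_projector P /\
  forall z : 'I_m -> bool,
    if f z then 2%:R / 3%:R <= accept_prob P psi z
    else accept_prob P psi z <= 1 / 3%:R.

Definition qnaadt_cost (R : realType) (m : nat) (f : ('I_m -> bool) -> bool)
    (c : nat) : Prop :=
  exists (W : finType) (psi : qstate R m c W) (P : qop R m c W),
    qnaadt_computes psi P f.

(* Upper bound: query every bit on its own, classically, and accept iff f holds
   of the answers; this costs m = k + 2^k <= 2 * 2^k queries.
   Lower bound, by a hybrid argument: for every address x, the inputs
   yes x = (x, e_bin(x)) and no x = (x, 0) are separated by the tree, so a
   constant fraction of the squared amplitude of the initial state sits on
   basis states whose oracle answers differ on yes x and no x.  A query set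
   that separates yes x from no x contains the bit y_bin(x) and has all its
   bits set in yes x, hence it determines x; so each of the c query sets of a
   basis state separates at most one pair, and summing over the 2^k addresses
   gives 2^k <= 80 c. *)

From HB Require Import structures.
From mathcomp Require Import all_boot all_order all_algebra.
From mathcomp Require Import reals.
From mathcomp Require Import complex.
From mathcomp Require Import ring zify.

Set Implicit Arguments.
Unset Strict Implicit.
Unset Printing Implicit Defensive.

Import Order.TTheory GRing.Theory Num.Theory.
Local Open Scope ring_scope.

Lemma sqr_normB_le (R : rcfType) (a b : R[i]) :
  `|a - b| ^+ 2 <= 2%:R * `|a| ^+ 2 + 2%:R * `|b| ^+ 2.
Proof.
have -> : 2%:R * `|a| ^+ 2 + 2%:R * `|b| ^+ 2 = `|a - b| ^+ 2 + `|a + b| ^+ 2.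
  by rewrite !normCK rmorphB rmorphD /=; ring.
by rewrite lerDl normCK mul_conjC_ge0.
Qed.

Lemma sqr_normD_le (R : rcfType) (a b : R[i]) :
  4%:R * `|a + b| ^+ 2 <= 5%:R * `|a| ^+ 2 + 20%:R * `|b| ^+ 2.
Proof.
have -> : 5%:R * `|a| ^+ 2 + 20%:R * `|b| ^+ 2 =
          4%:R * `|a + b| ^+ 2 + `|a - 4%:R * b| ^+ 2.
  by rewrite !normCK rmorphB rmorphD rmorphM /= conjC_nat; ring.
by rewrite lerDl normCK mul_conjC_ge0.
Qed.

Section QuantumStates.
Variables (R : realType) (m c : nat) (W : finType).
Local Notation B := (qbasis m c W).
Local Notation C := (R[i]).
Local Notation qstate := (qstate R m c W).
Local Notation qop := (qop R m c W).

Lemma sqnormE (v : qstate) : sqnorm v = \sum_x v x * (v x)^*.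
Proof. by apply: eq_bigr => x _; rewrite normCK. Qed.

Lemma sqnorm_ge0 (v : qstate) : 0 <= sqnorm v.
Proof. by rewrite sqnormE; apply: sumr_ge0 => x _; exact: mul_conjC_ge0. Qed.

Lemma sqnormZ (a : C) (v : qstate) :
  sqnorm (fun x => a * v x) = `|a| ^+ 2 * sqnorm v.
Proof.
by rewrite /sqnorm mulr_sumr; apply: eq_bigr => x _; rewrite normrM exprMn.
Qed.

Lemma projector_pythagoras (P : qop) (w : qstate) : is_projector P ->
  sqnorm w = sqnorm (apply_op P w) + sqnorm (fun x => w x - apply_op P w x).
Proof.
move=> [P_herm P_idem]; set Pw := apply_op P w.
(* <Pw, Pw> = <Pw, w> = <w, Pw>, as P is hermitian and idempotent. *)
pose K := \sum_(y : B) \sum_(z : B) w y * (w z)^* * P z y.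
have dot_Pw_Pw : \sum_x Pw x * (Pw x)^* = K.
  rewrite /K /Pw /apply_op.
  under eq_bigr => x _ do rewrite rmorph_sum mulr_suml.
  under eq_bigr => x _ do under eq_bigr => y _ do rewrite mulr_sumr.
  rewrite exchange_big /=; apply: eq_bigr => y _.
  rewrite exchange_big /=; apply: eq_bigr => z _.
  rewrite -(P_idem z y) mulr_sumr; apply: eq_bigr => x _.
  by rewrite rmorphM /= -P_herm; ring.
have dot_Pw_w : \sum_x Pw x * (w x)^* = K.
  rewrite /K /Pw /apply_op.
  under eq_bigr => x _ do rewrite mulr_suml.
  rewrite exchange_big /=; apply: eq_bigr => y _.
  by apply: eq_bigr => x _; ring.
have dot_w_Pw : \sum_x w x * (Pw x)^* = K.
  rewrite /K /Pw /apply_op.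
  under eq_bigr => x _ do rewrite rmorph_sum mulr_sumr.
  apply: eq_bigr => x _; apply: eq_bigr => y _.
  by rewrite rmorphM /= -P_herm; ring.
rewrite !sqnormE.
under [X in _ = _ + X]eq_bigr => x _ do rewrite rmorphB /= mulrBl !mulrBr.
by rewrite !sumrB dot_Pw_Pw dot_Pw_w dot_w_Pw -dot_Pw_Pw; ring.
Qed.

Lemma sqnorm_projector_le (P : qop) (w : qstate) :
  is_projector P -> sqnorm (apply_op P w) <= sqnorm w.
Proof.
by move=> P_proj; rewrite (projector_pythagoras w P_proj) lerDl sqnorm_ge0.
Qed.

Lemma apply_opD (P : qop) (u v : qstate) x :
  apply_op P u x = apply_op P v x + apply_op P (fun y => u y - v y) x.
Proof. by rewrite /apply_op -big_split /=; apply: eq_bigr => y _; ring. Qed.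

Lemma oracle_basisK z : involutive (@oracle_basis m c W z).
Proof.
move=> [[Ss b] w] /=; congr (_, _, _); apply/ffunP => j.
by rewrite !ffunE addbK.
Qed.

Definition touched (z z' : 'I_m -> bool) (b : B) : bool :=
  [exists j, ANDS (b.1.1 j) z != ANDS (b.1.1 j) z'].

Definition touched_weight (z z' : 'I_m -> bool) (psi : qstate) : C :=
  \sum_(b | touched z z' b) `|psi b| ^+ 2.

Lemma touched_oracle z z' z'' b :
  touched z z' (oracle_basis z'' b) = touched z z' b.
Proof. by case: b => [[Ss b] w]. Qed.

Lemma oracle_basis_untouched z z' b :
  ~~ touched z z' b -> oracle_basis z b = oracle_basis z' b.
Proof.
case: b => [[Ss b] w] /=; rewrite negb_exists => /forallP same_answers.
congr (_, _, _); apply/ffunP => j; rewrite !ffunE.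
by move/negPn/eqP: (same_answers j) => ->.
Qed.

Lemma sqnorm_oracleB_le z z' (psi : qstate) :
  sqnorm (fun b => oracle z psi b - oracle z' psi b) <=
  4%:R * touched_weight z z' psi.
Proof.
rewrite /sqnorm (bigID (touched z z')) /=.
rewrite [X in _ + X]big1 ?addr0; last first.
  move=> b /oracle_basis_untouched; rewrite /oracle => ->.
  by rewrite subrr normr0 expr2 mulr0.
have touched_weight_oracle z0 :
    \sum_(b | touched z z' b) `|psi (oracle_basis z0 b)| ^+ 2 =
    touched_weight z z' psi.
  rewrite /touched_weight [RHS](reindex_inj (inv_inj (oracle_basisK z0))) /=.
  by apply: eq_bigl => b; rewrite touched_oracle.
apply: le_trans (_ : \sum_(b | touched z z' b)
    (2%:R * `|psi (oracle_basis z b)| ^+ 2 +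
     2%:R * `|psi (oracle_basis z' b)| ^+ 2) <= _).
  by apply: ler_sum => b _; apply: sqr_normB_le.
by rewrite big_split /= -!mulr_sumr !touched_weight_oracle -mulrDl -natrD.
Qed.

Lemma touched_weight_separated (P : qop) (psi : qstate) z1 z0 :
  is_projector P ->
  2%:R / 3%:R <= accept_prob P psi z1 -> accept_prob P psi z0 <= 1 / 3%:R ->
  1 <= 80%:R * touched_weight z1 z0 psi.
Proof.
move=> P_proj accept1 accept0.
set d := fun y => oracle z1 psi y - oracle z0 psi y.
have accept_le : 4%:R * accept_prob P psi z1 <=
    5%:R * accept_prob P psi z0 + 20%:R * sqnorm (apply_op P d).
  rewrite /accept_prob /sqnorm !mulr_sumr -big_split /=.
  apply: ler_sum => x _; rewrite (apply_opD P _ (oracle z0 psi)).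
  exact: sqr_normD_le.
have gap : 1 = 4%:R * (2%:R / 3%:R) - 5%:R * (1 / 3%:R) :> C.
  by apply/eqP; rewrite -subr_eq0; apply/eqP; field.
rewrite [leLHS]gap; apply: le_trans (_ : 4%:R * accept_prob P psi z1 -
                                  5%:R * accept_prob P psi z0 <= _).
  by apply: lerB; rewrite ler_pM2l ?ltr0n.
rewrite lerBlDl; apply: (le_trans accept_le); rewrite lerD2l.
rewrite (_ : 80 = 20 * 4)%N // natrM -mulrA ler_pM2l ?ltr0n //.
exact: le_trans (sqnorm_projector_le d P_proj) (sqnorm_oracleB_le z1 z0 psi).
Qed.

End QuantumStates.

Section LowerBound.
Variables (R : realType) (m c : nat) (W : finType).
Variable f : ('I_m -> bool) -> bool.
Variables (I : finType) (yes no : I -> 'I_m -> bool).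
Hypotheses (f_yes : forall i, f (yes i)) (f_no : forall i, f (no i) = false).
Hypothesis separated_uniq : forall S i i',
  ANDS S (yes i) != ANDS S (no i) ->
  ANDS S (yes i') != ANDS S (no i') -> i = i'.

Lemma sum_touched_le (b : qbasis m c W) :
  (\sum_i touched (yes i) (no i) b <= c)%N.
Proof.
set sep := fun j i => ANDS (b.1.1 j) (yes i) != ANDS (b.1.1 j) (no i).
apply: leq_trans (_ : \sum_i \sum_(j < c) sep j i <= c)%N.
  apply: leq_sum => i _; rewrite /touched; case: existsP => [[j sep_j]|] //.
  by rewrite (bigD1 j) //= [sep j i]sep_j.
rewrite exchange_big /= -[X in (_ <= X)%N]card_ord -sum1_card.
apply: leq_sum => j _.
have [i0 sep_i0|no_sep] := pickP (sep j); last first.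
  by rewrite big1 // => i _; rewrite no_sep.
rewrite (bigD1 i0) //= sep_i0 big1 // => i ne_i_i0.
apply/eqP; rewrite eqb0; apply/negP => sep_i.
by rewrite (separated_uniq sep_i sep_i0) eqxx in ne_i_i0.
Qed.

Lemma sum_touched_weight_le (psi : qstate R m c W) :
  \sum_i touched_weight (yes i) (no i) psi <= c%:R * sqnorm psi.
Proof.
rewrite /touched_weight /sqnorm mulr_sumr.
under eq_bigr => i _ do rewrite big_mkcond /=.
rewrite exchange_big /=; apply: ler_sum => b _.
apply: le_trans (_ : (\sum_i touched (yes i) (no i) b)%:R * `|psi b| ^+ 2 <= _).
  rewrite natr_sum mulr_suml; apply: ler_sum => i _.
  by case: touched; rewrite ?mul1r ?mul0r.
by rewrite ler_wpM2r ?exprn_ge0 // ler_nat sum_touched_le.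
Qed.

Lemma qnaadt_computes_card_le (psi : qstate R m c W) (P : qop R m c W) :
  qnaadt_computes psi P f -> (#|I| <= 80 * c)%N.
Proof.
move=> [psi_unit [P_proj correct]].
have weight_ge i : 1 <= 80%:R * touched_weight (yes i) (no i) psi.
  apply: (touched_weight_separated P_proj).
    by have := correct (yes i); rewrite f_yes.
  by have := correct (no i); rewrite f_no.
rewrite -(ler_nat R[i]) natrM -sum1_card natr_sum.
apply: le_trans (_ : \sum_i 80%:R * touched_weight (yes i) (no i) psi <= _).
  exact: ler_sum.
rewrite -mulr_sumr ler_pM2l ?ltr0n //.
by have := sum_touched_weight_le psi; rewrite psi_unit mulr1.
Qed.

End LowerBound.

Lemma binS k (x : 'I_k.+1 -> bool) :
  bin x = (x ord0 * 2 ^ k + bin (fun i : 'I_k => x (lift ord0 i)))%N.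
Proof.
rewrite /bin big_ord_recl /= subn0; congr (_ + _)%N.
by apply: eq_bigr => i _; congr (_ * 2 ^ _)%N; rewrite /bump /=; lia.
Qed.

Lemma bin_lt k (x : 'I_k -> bool) : (bin x < 2 ^ k)%N.
Proof.
elim: k x => [|k IHk] x; first by rewrite /bin big_ord0.
rewrite binS expnS; have := IHk (fun i => x (lift ord0 i)).
by case: (x ord0) => /=; lia.
Qed.

Lemma bin_inj k (x y : 'I_k -> bool) : bin x = bin y -> x =1 y.
Proof.
elim: k x y => [|k IHk] x y; first by move=> _ [].
rewrite !binS => eq_bin.
have x_lt := bin_lt (fun i : 'I_k => x (lift ord0 i)).
have y_lt := bin_lt (fun i : 'I_k => y (lift ord0 i)).
have eq_head : x ord0 = y ord0.
  by move: eq_bin x_lt y_lt; case: (x ord0); case: (y ord0) => /=; lia.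
move: eq_bin; rewrite eq_head => /addnI eq_tail i.
have [j ->|->] := unliftP ord0 i; last exact: eq_head.
exact: (IHk _ _ eq_tail j).
Qed.

Section AddrInputs.
Variable k : nat.
Local Notation m := (k + 2 ^ k)%N.

Definition addr_input (x : 'I_k -> bool) (y : 'I_(2 ^ k) -> bool) :
    'I_m -> bool :=
  fun i => match split i with inl a => x a | inr j => y j end.

Definition addr_yes (x : {ffun 'I_k -> bool}) :=
  addr_input x (fun j => val j == bin x).
Definition addr_no (x : {ffun 'I_k -> bool}) := addr_input x (fun _ => false).

Lemma addr_input_lshift x y (a : 'I_k) :
  addr_input x y (lshift (2 ^ k) a) = x a.
Proof. by rewrite /addr_input (unsplitK (inl a)). Qed.

Lemma addr_input_rshift x y (j : 'I_(2 ^ k)) :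
  addr_input x y (rshift k j) = y j.
Proof. by rewrite /addr_input (unsplitK (inr j)). Qed.

Lemma ADDR_addr_yes x : ADDR (addr_yes x).
Proof.
apply/existsP; exists (Ordinal (bin_lt x)).
rewrite /addr_yes addr_input_rshift /= eqxx andbT; apply/eqP.
by apply: eq_bigr => i _; rewrite addr_input_lshift.
Qed.

Lemma ADDR_addr_no x : ADDR (addr_no x) = false.
Proof. by apply/existsP => -[j]; rewrite /addr_no addr_input_rshift andbF. Qed.

Lemma ANDS_addr_separated x (S : {set 'I_m}) :
  ANDS S (addr_yes x) != ANDS S (addr_no x) ->
  ANDS S (addr_yes x) /\
  exists2 j : 'I_(2 ^ k), rshift k j \in S & val j = bin x.
Proof.
rewrite /ANDS.
have ANDS_no_yes :
    [forall i in S, addr_no x i] -> [forall i in S, addr_yes x i].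
  move=> /forall_inP no_true; apply/forall_inP => i /no_true.
  by rewrite /addr_no /addr_yes /addr_input; case: (split i).
case yes_true: [forall i in S, addr_yes x i];
  case no_true: [forall i in S, addr_no x i] => //= _; last first.
  by move: (ANDS_no_yes no_true); rewrite yes_true.
split=> //; move/negbT: no_true; rewrite negb_forall_in => /exists_inP [i iS].
move/forall_inP/(_ i iS): yes_true; move: iS.
rewrite /addr_yes /addr_no -(splitK i); case: (split i) => [a|j] /= iS.
  by rewrite !addr_input_lshift => ->.
by rewrite !addr_input_rshift => /eqP bin_j; exists j.
Qed.

Lemma addr_separated_uniq (S : {set 'I_m}) x x' :
  ANDS S (addr_yes x) != ANDS S (addr_no x) ->
  ANDS S (addr_yes x') != ANDS S (addr_no x') -> x = x'.
Proof.
move=> /ANDS_addr_separated [_ [j jS bin_j]] /ANDS_addr_separated [yes'_true _].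
move/forall_inP/(_ _ jS): yes'_true.
rewrite /addr_yes addr_input_rshift => /eqP bin'_j.
by apply/ffunP; apply: bin_inj; rewrite -bin_j.
Qed.

End AddrInputs.

Lemma ADDR_cost_ge (R : realType) k c :
  qnaadt_cost R (@ADDR k) c -> (2 ^ k <= 80 * c)%N.
Proof.
move=> [W [psi [P computes]]].
have := qnaadt_computes_card_le (@ADDR_addr_yes k) (@ADDR_addr_no k)
  (@addr_separated_uniq k) computes.
by rewrite card_ffun card_bool card_ord.
Qed.

Section QueryEveryBit.
Variables (R : realType) (m : nat) (f : ('I_m -> bool) -> bool).
Hypothesis f_ext : forall z z', z =1 z' -> f z = f z'.
Local Notation B := (qbasis m m unit).

Definition query_every_bit : B := ([ffun j => [set j]], [ffun => false], tt).

Definition basis_state (b0 : B) : qstate R m m unit := fun b => (b == b0)%:R.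

Definition answer_projector : qop R m m unit :=
  fun b b' => ((b == b') && f (fun i => b.1.2 i))%:R.

Lemma sqnorm_basis_state (b0 : B) : sqnorm (basis_state b0) = 1.
Proof.
rewrite /sqnorm (bigD1 b0) //= big1 ?addr0 => [|b /negbTE ne_b_b0].
  by rewrite /basis_state eqxx normr1 expr1n.
by rewrite /basis_state ne_b_b0 normr0 expr0n.
Qed.

Lemma answer_projector_is_projector : is_projector answer_projector.
Proof.
split=> [b b'|b b''].
  by rewrite /answer_projector conjC_nat; case: (eqVneq b b') => [->|].
rewrite /answer_projector (bigD1 b) //= eqxx big1 ?addr0 => [|b' ne_b'_b].
  by rewrite -natrM; case: f; case: (b == b'').
by rewrite eq_sym (negbTE ne_b'_b) mul0r.
Qed.

Lemma ANDS1 (z : 'I_m -> bool) i : ANDS [set i] z = z i.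
Proof. by apply/forall_inP/idP => [/(_ i (set11 i))|z_i j /set1P ->]. Qed.

Lemma accept_prob_query_every_bit z :
  accept_prob answer_projector (basis_state query_every_bit) z = (f z)%:R.
Proof.
set bz := oracle_basis z query_every_bit.
have f_bz : f (fun i => bz.1.2 i) = f z.
  by apply: f_ext => i; rewrite /= !ffunE ANDS1.
have sqr_f : (f z)%:R = `|(f z)%:R| ^+ 2 :> R[i].
  by case: (f z); rewrite ?normr1 ?normr0 ?expr1n ?expr0n.
rewrite /accept_prob sqr_f -[RHS]mulr1 -[X in _ * X](sqnorm_basis_state bz).
rewrite -sqnormZ; apply: eq_bigr => b _.
congr (`|_| ^+ 2); rewrite /apply_op (bigD1 b) //= big1 ?addr0 => [|b' ne_b'_b].
  rewrite /answer_projector /oracle /basis_state eqxx /=.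
  rewrite -(inj_eq (inv_inj (oracle_basisK z))) oracle_basisK -/bz.
  by case: (eqVneq b bz) => [->|]; rewrite ?f_bz ?mulr0 ?mulr1.
by rewrite /answer_projector eq_sym (negbTE ne_b'_b) mul0r.
Qed.

Lemma qnaadt_cost_query_every_bit : qnaadt_cost R f m.
Proof.
exists unit, (basis_state query_every_bit), answer_projector; split.
  exact: sqnorm_basis_state.
split=> [|z]; first exact: answer_projector_is_projector.
rewrite accept_prob_query_every_bit; case: (f z).
  by rewrite ler_pdivrMr ?ltr0n // mul1r ler_nat.
by rewrite divr_ge0 ?ler0n.
Qed.

End QueryEveryBit.

Lemma ADDR_ext k (z z' : 'I_(k + 2 ^ k) -> bool) : z =1 z' -> ADDR z = ADDR z'.
Proof.
move=> eq_z; apply: eq_existsb => j; rewrite eq_z.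
by congr ((_ == _) && _); apply: eq_bigr => i _; rewrite eq_z.
Qed.

Theorem claimA2 (R : realType) :
  exists (a b : R), 0 < a /\ 0 < b /\
    forall k : nat, (1 <= k)%N ->
      (exists c : nat, c%:R <= b * (2 ^ k)%:R /\ qnaadt_cost R (@ADDR k) c) /\
      (forall c : nat, qnaadt_cost R (@ADDR k) c -> a * (2 ^ k)%:R <= c%:R).
Proof.
exists 80%:R^-1, 2%:R; split; first by rewrite invr_gt0 ltr0n.
split=> [|k _]; first by rewrite ltr0n.
split=> [|c /ADDR_cost_ge cost_ge].
  exists (k + 2 ^ k)%N.
  split; last exact: qnaadt_cost_query_every_bit (@ADDR_ext k).
  by rewrite -natrM ler_nat mul2n -addnn leq_add2r ltnW // ltn_expl.
by rewrite mulrC ler_pdivrMr ?ltr0n // mulrC -natrM ler_nat.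
Qed.
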